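(* Let $G$ be a board that is symmetric under reflection across some line, with no edges lying along that axis of symmetry and at most one edge crossing that axis. If no edge crosses the axis of symmetry, then Player~2 has a winning strategy in the Game of Cycles on $G$. If a single edge crosses the axis of symmetry, then Player~1 has a winning strategy.
   Context: The Game of Cycles. A board is a simple connected planar graph embedded in the plane, together with its bounded cells; here the embedded board is invariant under reflection across a line. Two players alternate turns; on a turn a player marks one unmarked edge with an arrow pointing along the edge in one of its two directions. Each edge receives at most one arrow, and arrows have the same effect regardless of who placed them. Moves must obey the sink-source rule: no move may create a sink (a vertex all of whose incident edges are marked with arrows pointing toward it) or a source (a vertex all of whose incident edges are marked with arrows pointing away from it). A player who has a legal move must make one. A cycle cell is a bounded cell all of whose boundary edges are marked with arrows all cycling in the same direction around that cell. The first player to create a cycle cell wins; if play ends (no legal move remains) without a cycle cell, the player who made the last move wins. A winning strategy guarantees a win regardless of the opponent's moves. *)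

(* Boards are encoded as plane combinatorial maps (rotation systems). *)
From mathcomp Require Import all_boot fingroup perm.
Set Implicit Arguments. Unset Strict Implicit. Unset Printing Implicit Defensive.

(* A board is given by:
   - a finite type D of darts (half-edges, i.e. oriented edges);
   - alpha : the fixed-point-free involution sending a dart to its reverse
     (the edge of d is {d, alpha d}; d goes from tail(d) to tail(alpha d));
   - rho   : the rotation; the vertices are the rho-orbits, the rho-orbit of d
     being the set of darts whose tail is that vertex (counterclockwise order);
   - faces : the orbits of phi := fun d => rho (alpha d) (boundary walks of the
     cells, all traversed in the same rotational sense);
   - outer : a dart of the unbounded face; the bounded cells are the other faces. *)

Section Board.
Variables (D : finType) (alpha rho : {perm D}) (outer : D).

Definition phi (d : D) : D := rho (alpha d).

Definition plane_board : Prop :=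
  [/\ (forall d, alpha (alpha d) = d) /\ (forall d, alpha d != d),
      (forall x y : D, connect (fun u v => (v == alpha u) || (v == rho u)) x y),
      (* genus 0 (Euler's formula V - E + F = 2, faces including the outer one) *)
      fcard rho D + fcard phi D = #|D| %/ 2 + 2,
      (* no loops *)
      (forall d, ~~ fconnect rho d (alpha d)) &
      (* no multiple edges *)
      (forall d d', fconnect rho d d' -> fconnect rho (alpha d) (alpha d') -> d = d')].

(* tau is a reflection symmetry of the plane board: an involutive,
   orientation-reversing automorphism of the map preserving the unbounded face. *)
Definition reflection_symmetry (tau : {perm D}) : Prop :=
  [/\ (forall d, tau (tau d) = d),
      (forall d, tau (alpha d) = alpha (tau d)),
      (forall d, rho (tau (rho d)) = tau d) &
      (* tau maps the face of d onto the face of alpha (tau d); it fixes the outer face *)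
      fconnect phi outer (alpha (tau outer))].

(* Game positions: M is the set of darts d whose edge carries an arrow from
   tail(d) to tail(alpha d). *)

Definition has_sink_or_source (M : {set D}) : bool :=
  [exists x, [forall y, fconnect rho x y ==> (alpha y \in M)]
          || [forall y, fconnect rho x y ==> (y \in M)]].

Definition legal (M : {set D}) (d : D) : bool :=
  [&& d \notin M, alpha d \notin M & ~~ has_sink_or_source (d |: M)].

Definition has_cycle_cell (M : {set D}) : bool :=
  [exists x, ~~ fconnect phi outer x &&
     ([forall y, fconnect phi x y ==> (y \in M)]
      || [forall y, fconnect phi x y ==> (alpha y \in M)])].

(* winning M : the player about to move from position M has a winning strategy;
   losing M  : the player about to move from M has no winning strategy, i.e. the
   opponent (who just moved) has one. Positions considered contain no cycle cell.
   A player creating a cycle cell wins at once; a player with no legal move has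
   lost, since the opponent made the last move. *)
Inductive winning (M : {set D}) : Prop :=
  | Winning d : legal M d -> has_cycle_cell (d |: M) \/ losing (d |: M) -> winning M
with losing (M : {set D}) : Prop :=
  | Losing : (forall d, legal M d -> ~~ has_cycle_cell (d |: M) /\ winning (d |: M)) ->
             losing M.

Definition player1_wins : Prop := winning set0.
Definition player2_wins : Prop := losing set0.

End Board.

From mathcomp Require Import all_boot fingroup perm.
Set Implicit Arguments. Unset Strict Implicit. Unset Printing Implicit Defensive.

(* Mirror strategy: the second player answers each arrow d with its reflection
   reversed, mirror d = alpha (tau d); the reversal makes the reflection
   exchange sinks and sources and match the orientation of a cell with that of
   its image. The strategy maintains a mirror-symmetric, consistent, sink- and
   source-free position in which the crossing edge (if any) is marked and every
   bounded cell, for each of its two orientations, is blocked by an arrow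
   pointing against it or still has two unmarked edges; so the opponent never
   creates a cycle cell. If the opponent leaves a cell one edge short of a
   cycle, the player to move completes it. Otherwise the mirror reply is legal
   and either wins or restores the invariant: a cell left with a single open
   edge by the reply would contain the reply, as would its mirror image; the
   two cells then coincide and the open edge, being its own mirror image,
   crosses the axis, but the crossing edge is marked. Without a crossing edge
   the empty board satisfies the invariant; with one, the first player marks
   it and then plays the mirror strategy as second player. *)

Lemma fconnect_anticonj (T : finType) (f g : T -> T) : injective f ->
  (forall x, f (g (f x)) = g x) -> forall x y, fconnect f x y -> fconnect f (g x) (g y).
Proof.
move=> f_inj fgf x y /iter_findex <-; set n := findex f x y.
have gfn : iter n f (g (iter n f x)) = g x.
  by elim: n => [|n IHn] //; rewrite iterSr iterS fgf IHn.
by rewrite fconnect_sym // -[X in fconnect _ _ X]gfn fconnect_iter.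
Qed.

Lemma card_setCU1 (T : finType) (A : {set T}) a :
  a \notin A -> #|~: (a |: A)| < #|~: A|.
Proof. by move=> aA; rewrite proper_card // properC properUr // sub1set. Qed.

Section MirrorStrategy.
Variables (D : finType) (alpha rho tau : {perm D}) (outer : D).
Hypothesis board : plane_board alpha rho.
Hypothesis sym : reflection_symmetry alpha rho outer tau.
Hypothesis tau_neq : forall d, tau d != d.

Implicit Types (M : {set D}) (o : bool) (d e p q v x y z : D).

Local Notation phi := (phi alpha rho).
Local Notation legal := (legal alpha rho).
Local Notation has_sink_or_source := (has_sink_or_source alpha rho).
Local Notation has_cycle_cell := (has_cycle_cell alpha rho outer).
Local Notation winning := (winning alpha rho outer).
Local Notation losing := (losing alpha rho outer).

Lemma alphaK : involutive alpha. Proof. by case: board => [[]]. Qed.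
Lemma alpha_neq d : alpha d != d. Proof. by case: board => [[]]. Qed.
Lemma no_loop d : ~~ fconnect rho d (alpha d).
Proof. by case: board => _ _ _ /(_ d). Qed.
Lemma no_multi_edge d d' :
  fconnect rho d d' -> fconnect rho (alpha d) (alpha d') -> d = d'.
Proof. by case: board => _ _ _ _; apply. Qed.

Lemma tauK : involutive tau. Proof. by case: sym. Qed.
Lemma tau_alpha d : tau (alpha d) = alpha (tau d). Proof. by case: sym. Qed.
Lemma rho_tau_rho d : rho (tau (rho d)) = tau d. Proof. by case: sym. Qed.

Lemma alpha_inj : injective alpha. Proof. exact: perm_inj. Qed.
Lemma phi_inj : injective phi.
Proof. by move=> d d' /perm_inj /perm_inj. Qed.

Lemma fconnect_rho_sym d d' : fconnect rho d d' = fconnect rho d' d.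
Proof. exact/fconnect_sym/perm_inj. Qed.
Lemma fconnect_phi_sym d d' : fconnect phi d d' = fconnect phi d' d.
Proof. exact/fconnect_sym/phi_inj. Qed.

Lemma fconnect_rho_tau d d' : fconnect rho (tau d) (tau d') = fconnect rho d d'.
Proof.
have tau_rho := fconnect_anticonj (@perm_inj _ rho) rho_tau_rho.
by apply/idP/idP => [/tau_rho|/tau_rho //]; rewrite !tauK.
Qed.

Lemma rho_alpha_neq d : rho (alpha d) != d.
Proof.
apply: contraNneq (no_loop d) => rad; rewrite fconnect_rho_sym -{2}rad.
exact: fconnect1.
Qed.

Definition mirror (d : D) : D := alpha (tau d).

Lemma mirrorK : involutive mirror.
Proof. by move=> d; rewrite /mirror tau_alpha alphaK tauK. Qed.
Lemma mirror_inj : injective mirror. Proof. exact: inv_inj mirrorK. Qed.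
Lemma mirror_alpha d : mirror (alpha d) = alpha (mirror d).
Proof. by rewrite /mirror tau_alpha. Qed.
Lemma alpha_mirror d : alpha (mirror d) = tau d.
Proof. exact: alphaK. Qed.
Lemma phi_mirror_phi d : phi (mirror (phi d)) = mirror d.
Proof. by rewrite /phi /mirror alphaK rho_tau_rho tau_alpha. Qed.

Lemma fconnect_phi_mirror x y : fconnect phi (mirror x) (mirror y) = fconnect phi x y.
Proof.
have phi_mirror := fconnect_anticonj phi_inj phi_mirror_phi.
by apply/idP/idP => [/phi_mirror|/phi_mirror //]; rewrite !mirrorK.
Qed.

(* [on_cell o x y]: the arrow y runs along the boundary of the face of x,
   in the direction of phi if o, against it otherwise. *)
Definition orient (o : bool) (d : D) : D := if o then d else alpha d.
Definition on_cell (o : bool) (x y : D) := fconnect phi x (orient o y).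
Definition bounded (x : D) := ~~ fconnect phi outer x.

Lemma orientK o : involutive (orient o).
Proof. by case: o => //=; exact: alphaK. Qed.
Lemma orient_mirror o d : orient o (mirror d) = mirror (orient o d).
Proof. by case: o => //=; rewrite mirror_alpha. Qed.

Lemma on_cell_mirror o x y : on_cell o (mirror x) (mirror y) = on_cell o x y.
Proof. by rewrite /on_cell orient_mirror fconnect_phi_mirror. Qed.

Lemma on_cell_orient o x : on_cell o x (orient o x).
Proof. by rewrite /on_cell orientK connect0. Qed.

Lemma on_cell_trans o x x' y w :
  on_cell o x y -> on_cell o x' y -> on_cell o x w -> on_cell o x' w.
Proof.
rewrite /on_cell fconnect_phi_sym => yx x'y xw.
exact: connect_trans x'y (connect_trans yx xw).
Qed.

Lemma bounded_mirror x : bounded (mirror x) = bounded x.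
Proof.
have outer_mirror : fconnect phi outer (mirror outer) by case: sym.
rewrite /bounded (same_connect (fconnect_sym phi_inj) outer_mirror).
by rewrite fconnect_phi_mirror.
Qed.

Lemma face_neighbours x z : fconnect phi x z -> exists p q,
  [/\ fconnect phi x p, fconnect phi x q, fconnect rho z (alpha p),
      fconnect rho (alpha z) q & (p != z) && (q != z)].
Proof.
move=> xz; have [p phi_p] : exists p, phi p = z.
  by exists (alpha ((rho^-1)%g z)); rewrite /phi alphaK permKV.
exists p, (phi z); split.
- rewrite (connect_trans xz) // -{1}phi_p fconnect_phi_sym; exact: fconnect1.
- exact: connect_trans xz (fconnect1 _ _).
- rewrite -{1}phi_p fconnect_rho_sym; exact: fconnect1.
- exact: fconnect1.
- rewrite rho_alpha_neq andbT; apply: contraNneq (rho_alpha_neq z) => pz.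
  by rewrite -{2}phi_p pz.
Qed.

Lemma cell_neighbours o x z : on_cell o x z -> exists p q,
  [/\ on_cell o x p, on_cell o x q, fconnect rho z (alpha p),
      fconnect rho (alpha z) q & (p != z) && (q != z)].
Proof.
case: o => /face_neighbours [p [q [xp xq zp zq pq_z]]]; first by exists p, q.
exists (alpha q), (alpha p); rewrite /on_cell /= !alphaK in zq *; split=> //.
by rewrite !(canF_eq alphaK) andbC.
Qed.

Lemma cell_two_darts o x : exists y1 y2, [/\ y1 != y2, on_cell o x y1 & on_cell o x y2].
Proof.
have [p [_ [xp _ _ _ /andP [px _]]]] := cell_neighbours (on_cell_orient o x).
by exists p, (orient o x); rewrite px xp on_cell_orient.
Qed.

Definition sink (M : {set D}) (v : D) := [forall y, fconnect rho v y ==> (alpha y \in M)].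
Definition source (M : {set D}) (v : D) := [forall y, fconnect rho v y ==> (y \in M)].

Lemma has_sink_or_sourceP M :
  reflect (exists v, sink M v || source M v) (has_sink_or_source M).
Proof. exact: existsP. Qed.

Lemma no_sink_or_source_sink M v : ~~ has_sink_or_source M -> ~~ sink M v.
Proof. by apply: contra => sk; apply/has_sink_or_sourceP; exists v; rewrite sk. Qed.
Lemma no_sink_or_source_source M v : ~~ has_sink_or_source M -> ~~ source M v.
Proof.
by apply: contra => src; apply/has_sink_or_sourceP; exists v; rewrite src orbT.
Qed.

Lemma sink_setU1 M z v : sink (z |: M) v -> ~~ fconnect rho v (alpha z) -> sink M v.
Proof.
move=> /forallP sk vz; apply/forallP => y; apply/implyP => vy.
move: (implyP (sk y) vy); rewrite in_setU1 => /predU1P [ayz|//].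
by move: vz; rewrite -ayz alphaK vy.
Qed.

Lemma source_setU1 M z v : source (z |: M) v -> ~~ fconnect rho v z -> source M v.
Proof.
move=> /forallP src vz; apply/forallP => y; apply/implyP => vy.
move: (implyP (src y) vy); rewrite in_setU1 => /predU1P [yz|//].
by move: vz; rewrite -yz vy.
Qed.

Definition consistent (M : {set D}) := forall y, y \in M -> alpha y \notin M.
Definition mirror_closed (M : {set D}) := forall y, (mirror y \in M) = (y \in M).
Definition crossing_marked (M : {set D}) :=
  forall y, tau y = alpha y -> (y \in M) || (alpha y \in M).

Lemma consistent_setU1 M d : consistent M -> legal M d -> consistent (d |: M).
Proof.
move=> consM /and3P [dM adM _] y; rewrite !in_setU1 => /predU1P [->|yM].
  by rewrite (negPf (alpha_neq d)) (negPf adM).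
rewrite (negPf (consM y yM)) orbF; apply: contraNneq adM => <-.
by rewrite alphaK.
Qed.

Lemma mirror_closed_setU2 M d : mirror_closed M -> mirror_closed (mirror d |: (d |: M)).
Proof.
by move=> mM y; rewrite !in_setU1 mM (inj_eq mirror_inj) (canF_eq mirrorK) orbCA.
Qed.

Lemma source_mirror M v : mirror_closed M -> source M (tau v) = sink M v.
Proof.
move=> mM; apply/forallP/forallP => all_v y; apply/implyP => vy.
  rewrite -mM mirror_alpha alpha_mirror; apply: implyP (all_v (tau y)) _.
  by rewrite fconnect_rho_tau.
rewrite -mM; apply: implyP (all_v (tau y)) _.
by rewrite -fconnect_rho_tau tauK.
Qed.

Lemma legal_not_crossing M d : crossing_marked M -> legal M d -> tau d != alpha d.
Proof.
move=> crossM /and3P [dM adM _]; apply/eqP => /crossM.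
by rewrite (negPf dM) (negPf adM).
Qed.

(* A new sink at v comes with a new source at tau v; these put both tau d and
   alpha d at v, so the edges of d and of its mirror image would join the same
   two vertices. *)
Lemma mirror_reply_legal M d : mirror_closed M -> legal M d -> tau d != alpha d ->
  legal (d |: M) (mirror d).
Proof.
move=> mM /and3P [dM adM no_ss] d_nc; set N := mirror d |: (d |: M).
have mN : mirror_closed N := mirror_closed_setU2 d mM.
have no_sink v : ~~ sink N v.
  apply/negP => skN; have srcN : source N (tau v) by rewrite source_mirror.
  have v_td : fconnect rho v (tau d).
    rewrite -alpha_mirror; apply: contraNT (sink_setU1 skN) _.
    exact: no_sink_or_source_sink.
  have v_ad : fconnect rho v (alpha d).
    rewrite -fconnect_rho_tau tau_alpha; apply: contraNT (source_setU1 srcN) _.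
    exact: no_sink_or_source_source.
  have ad_td : fconnect rho (alpha d) (tau d).
    by rewrite fconnect_rho_sym in v_ad; exact: connect_trans v_ad v_td.
  apply: (negP d_nc); rewrite (no_multi_edge ad_td) // alphaK fconnect_rho_sym.
  by rewrite -fconnect_rho_tau tau_alpha !tauK.
have md_d : mirror d != d.
  by apply: contraNneq d_nc => md; rewrite -alpha_mirror md.
rewrite /legal !in_setU1 negb_or md_d mM dM alpha_mirror negb_or tau_neq /=.
rewrite -mM /mirror tauK adM; apply/has_sink_or_sourceP => -[v /orP [|]].
  exact/negP/no_sink.
by rewrite -[v]tauK source_mirror //; apply/negP/no_sink.
Qed.

Definition open_darts (M : {set D}) (o : bool) (x : D) : {set D} :=
  [set y | on_cell o x y & y \notin M].
Definition blocked (M : {set D}) (o : bool) (x : D) :=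
  [exists y, on_cell o x y && (alpha y \in M)].

Lemma open_darts_setU1 M e o x : open_darts (e |: M) o x = open_darts M o x :\ e.
Proof. by apply/setP => y; rewrite !inE negb_or andbCA. Qed.

Lemma blocked_setU1 M e o x : blocked M o x -> blocked (e |: M) o x.
Proof.
case/existsP => y /andP [xy ayM]; apply/existsP; exists y.
by rewrite xy in_setU1 ayM orbT.
Qed.

Lemma open_darts_set1 M o x z y :
  open_darts M o x = [set z] -> on_cell o x y -> y \in z |: M.
Proof.
move=> open1 xy; rewrite in_setU1; apply/norP => -[yz yM].
have : y \in open_darts M o x by rewrite inE xy.
by rewrite open1 inE (negPf yz).
Qed.

Lemma open_darts_mirror M o x :
  mirror_closed M -> open_darts M o (mirror x) = mirror @: open_darts M o x.
Proof.
move=> mM; apply/setP => y; rewrite -[y]mirrorK mem_imset; last exact: mirror_inj.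
by rewrite !inE on_cell_mirror mM.
Qed.

Lemma blocked_mirror M o x : mirror_closed M -> blocked M o (mirror x) = blocked M o x.
Proof.
move=> mM; suff mir x' : blocked M o x' -> blocked M o (mirror x').
  by apply/idP/idP => [/mir|/mir //]; rewrite mirrorK.
case/existsP => y /andP [x'y ayM]; apply/existsP; exists (mirror y).
by rewrite on_cell_mirror x'y -mirror_alpha mM.
Qed.

Lemma has_cycle_cellP M :
  reflect (exists x o, bounded x /\ forall y, on_cell o x y -> y \in M)
          (has_cycle_cell M).
Proof.
apply: (iffP existsP) => [[x /andP [bx /orP [] /forallP allM]] | [x [o [bx allM]]]].
- by exists x, true; split=> // y; apply/implyP/allM.
- exists x, false; split=> // y xy; rewrite -[y]alphaK.
  exact: implyP (allM (alpha y)) xy.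
- exists x; apply/andP; split=> //; case: o allM => allM; apply/orP; [left|right].
  + by apply/forallP => y; apply/implyP/allM.
  + apply/forallP => y; apply/implyP => xy; apply: allM.
    by rewrite /on_cell /= alphaK.
Qed.

(* Marking z can only create a source at the tail of z or a sink at its head;
   the marked neighbours of z along the cell prevent both. *)
Lemma completing_move_legal M o x z : consistent M -> ~~ has_sink_or_source M ->
  ~~ blocked M o x -> open_darts M o x = [set z] -> legal M z.
Proof.
move=> consM no_ss unblocked open1.
have /setIdP [xz zM] : z \in open_darts M o x by rewrite open1 set11.
have azM : alpha z \notin M.
  by apply: contra unblocked => azM; apply/existsP; exists z; rewrite xz.
have [p [q [xp xq zp zq /andP [pz qz]]]] := cell_neighbours xz.
have marked y : on_cell o x y -> y != z -> alpha y \notin z |: M.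
  move=> xy yz; have yM : y \in M.
    by have := open_darts_set1 open1 xy; rewrite in_setU1 (negPf yz).
  rewrite in_setU1 negb_or consM // andbT; apply: contraNneq azM => <-.
  by rewrite alphaK.
rewrite /legal zM azM; apply/has_sink_or_sourceP => -[v /orP [sk|src]].
- have [vaz|] := boolP (fconnect rho v (alpha z)).
    by move: (marked q xq qz); rewrite (implyP (forallP sk q)) ?(connect_trans vaz).
  by move/(sink_setU1 sk); apply/negP/no_sink_or_source_sink.
- have [vz|] := boolP (fconnect rho v z).
    move: (marked p xp pz); rewrite (implyP (forallP src (alpha p))) //.
    exact: connect_trans vz zp.
  by move/(source_setU1 src); apply/negP/no_sink_or_source_source.
Qed.

Definition completable (M : {set D}) :=
  [exists x, exists o, [&& bounded x, ~~ blocked M o x & #|open_darts M o x| == 1]].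

Lemma completable_winning M :
  consistent M -> ~~ has_sink_or_source M -> completable M -> winning M.
Proof.
move=> consM no_ss /existsP [x /existsP [o /and3P [bx unblocked /cards1P [z open1]]]].
apply: (Winning (completing_move_legal consM no_ss unblocked open1)); left.
by apply/has_cycle_cellP; exists x, o; split=> // y /(open_darts_set1 open1).
Qed.

Definition cells_far (M : {set D}) :=
  forall x o, bounded x -> blocked M o x || (1 < #|open_darts M o x|).

Lemma cells_far_no_cycle M d :
  cells_far M -> consistent (d |: M) -> ~~ has_cycle_cell (d |: M).
Proof.
move=> far consM'; apply/has_cycle_cellP => -[x [o [bx allM']]].
case/orP: (far x o bx) => [/existsP [y /andP [xy ayM]] | /card_gt1P [y1 [y2 []]]].
  by move: (consM' y (allM' y xy)); rewrite in_setU1 ayM orbT.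
rewrite !inE => /andP [xy1 y1M] /andP [xy2 y2M]; apply/negP; rewrite negbK.
move: (allM' y1 xy1) (allM' y2 xy2); rewrite !in_setU1 (negPf y1M) (negPf y2M) !orbF.
by move=> /eqP -> /eqP ->.
Qed.

Lemma unmarked_cell_far M o x :
  (forall y, on_cell o x y -> y \notin M) -> 1 < #|open_darts M o x|.
Proof.
move=> unmarked; have [y1 [y2 [y12 xy1 xy2]]] := cell_two_darts o x.
by apply/card_gt1P; exists y1, y2; rewrite !inE xy1 xy2 !unmarked.
Qed.

Lemma nearly_complete_cell_after_reply M e o x :
  ~~ has_cycle_cell (e |: M) -> ~~ completable M -> bounded x ->
  ~~ blocked (e |: M) o x -> #|open_darts (e |: M) o x| <= 1 ->
  on_cell o x e /\ exists z, open_darts (e |: M) o x = [set z].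
Proof.
move=> no_cyc not_compl bx unblocked small.
have /cards1P [z open1] : #|open_darts (e |: M) o x| == 1.
  rewrite eqn_leq small card_gt0; apply: contraNneq no_cyc => open0.
  apply/has_cycle_cellP; exists x, o; split=> // y xy; apply: contraT => yN.
  by rewrite -(in_set0 y) -open0 inE xy.
split; last by exists z.
have unblockedM : ~~ blocked M o x by apply: contra unblocked; apply: blocked_setU1.
have : #|open_darts M o x| != 1.
  apply: contra not_compl => one; apply/existsP; exists x; apply/existsP; exists o.
  by rewrite bx unblockedM.
rewrite (cardsD1 e) -open_darts_setU1 open1 cards1.
by case: (boolP (e \in _)) => [/setIdP [] |].
Qed.

Lemma mirror_reply_cells_far M e :
  mirror_closed (e |: M) -> crossing_marked (e |: M) -> ~~ has_cycle_cell (e |: M) ->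
  ~~ completable M -> cells_far (e |: M).
Proof.
move=> mN crossN no_cyc not_compl x o bx; apply: contraT; rewrite negb_or -leqNgt => /andP [unblocked small].
have one_open := nearly_complete_cell_after_reply no_cyc not_compl.
have [xe [z open1]] := one_open o x bx unblocked small.
have mxe : on_cell o (mirror x) e.
  apply: (proj1 (one_open o (mirror x) _ _ _)).
  - by rewrite bounded_mirror.
  - by rewrite blocked_mirror.
  - by rewrite open_darts_mirror // card_imset //; exact: mirror_inj.
have : mirror z \in open_darts (e |: M) o x.
  have : mirror z \in open_darts (e |: M) o (mirror x).
    by rewrite open_darts_mirror // open1 imset_set1 set11.
  by rewrite !inE => /andP [mx_mz ->]; rewrite (on_cell_trans mxe xe mx_mz).
rewrite open1 inE => /eqP mzz.
have /setIdP [xz zN] : z \in open_darts (e |: M) o x by rewrite open1 set11.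
have tz : tau z = alpha z by rewrite -alpha_mirror mzz.
case/orP: (crossN z tz) => [zN'|azN]; first by rewrite zN' in zN.
by case/negP: unblocked; apply/existsP; exists z; rewrite xz.
Qed.

Definition mirror_position (M : {set D}) := [/\ mirror_closed M, consistent M,
  ~~ has_sink_or_source M, crossing_marked M & cells_far M].

Lemma mirror_reply_position M d :
  mirror_position M -> legal M d -> ~~ completable (d |: M) ->
  ~~ has_cycle_cell (mirror d |: (d |: M)) -> mirror_position (mirror d |: (d |: M)).
Proof.
move=> [mM consM _ crossM _] legal_d not_compl no_cyc.
have legal_md := mirror_reply_legal mM legal_d (legal_not_crossing crossM legal_d).
have mN := mirror_closed_setU2 d mM.
have crossN : crossing_marked (mirror d |: (d |: M)).
  by move=> y /crossM /orP [] yM; rewrite !in_setU1 yM !orbT.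
split=> //; last exact: mirror_reply_cells_far.
  exact: consistent_setU1 (consistent_setU1 consM legal_d) legal_md.
by case/and3P: legal_md.
Qed.

Lemma mirror_position_losing M : mirror_position M -> losing M.
Proof.
have [n] := ubnP #|~: M|; elim: n M => // n IHn M /ltnSE small posM.
have [mM consM no_ss crossM far] := posM.
constructor => d legal_d; have consM' := consistent_setU1 consM legal_d.
split; first exact: cells_far_no_cycle far consM'.
have [compl|not_compl] := boolP (completable (d |: M)).
  by apply: completable_winning compl => //; case/and3P: legal_d.
have legal_md := mirror_reply_legal mM legal_d (legal_not_crossing crossM legal_d).
apply: (Winning legal_md).
have [cyc|no_cyc] := boolP (has_cycle_cell (mirror d |: (d |: M))); [by left | right].
apply: IHn (mirror_reply_position posM legal_d not_compl no_cyc).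
have /and3P [dM _ _] := legal_d; have /and3P [mdM' _ _] := legal_md.
exact: leq_trans (card_setCU1 mdM') (leq_trans (ltnW (card_setCU1 dM)) small).
Qed.

Lemma mirror_position_set0 : (forall d, tau d != alpha d) -> mirror_position set0.
Proof.
move=> no_cross; split.
- by move=> y; rewrite !inE.
- by move=> y; rewrite inE.
- apply/has_sink_or_sourceP => -[v /orP [] /forallP /(_ v) /implyP /(_ (connect0 _ _))];
  by rewrite inE.
- by move=> y /eqP; rewrite (negPf (no_cross y)).
- by move=> x o _; rewrite unmarked_cell_far ?orbT // => y _; rewrite inE.
Qed.

(* If c were fixed by rho, so would be alpha c, and by connectivity the board
   would be the single edge {c, alpha c}. *)
Lemma crossing_dart_moves c : tau c = alpha c -> 2 < #|D| -> rho c != c.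
Proof.
move=> tc; apply: contraTneq => rc; rewrite -leqNgt.
have rac : rho (alpha c) = alpha c by have := rho_tau_rho c; rewrite rc tc.
pose A := [set c; alpha c]; pose adj u v := (v == alpha u) || (v == rho u).
have walkA u (s : seq D) : u \in A -> path adj u s -> last u s \in A.
  elim: s u => [|v s IHs] u //= uA /andP [/orP [] /eqP uv]; apply: IHs;
  by move: uA; rewrite uv !inE => /orP [] /eqP ->; rewrite ?alphaK ?rc ?rac eqxx ?orbT.
have : #|[set: D]| <= #|A|.
  apply/subset_leq_card/subsetP => y _.
  case: board => _ /(_ c y) /connectP [s walk ->] _ _ _.
  by apply: walkA walk; rewrite set21.
by rewrite cardsT cards2 => /leq_trans; apply; case: (_ != _).
Qed.

Lemma crossing_legal c : tau c = alpha c -> rho c != c -> legal set0 c.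
Proof.
move=> tc rc; rewrite /legal !inE setU0; apply/has_sink_or_sourceP => -[v].
have fixed (f : D -> D) : injective f ->
    [forall y, fconnect rho v y ==> (f y \in [set c])] -> rho v = v /\ f v = c.
  move=> f_inj /forallP all_c.
  have /set1P fv := implyP (all_c v) (connect0 _ _).
  have /set1P frv := implyP (all_c (rho v)) (fconnect1 _ _).
  by split=> //; apply: f_inj; rewrite frv fv.
case/orP => [/(fixed _ alpha_inj) [rv av] | /(fixed _ (@inj_id D)) [rv vc]].
  have vac : v = alpha c by rewrite -av alphaK.
  have := rho_tau_rho (alpha c); rewrite -vac rv vac tau_alpha tc alphaK => rcc.
  by rewrite rcc eqxx in rc.
by rewrite -vc rv eqxx in rc.
Qed.

Lemma mirror_position_crossing c : #|[set d | tau d == alpha d]| <= 2 ->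
  tau c = alpha c -> legal set0 c -> mirror_position [set c].
Proof.
move=> few tc legal_c; have mc : mirror c = c by rewrite /mirror tc alphaK.
split.
- by move=> y; rewrite !inE -{1}mc (inj_eq mirror_inj).
- by move=> y /set1P ->; rewrite inE alpha_neq.
- by move: legal_c; rewrite /legal setU0 => /and3P [].
- move=> y ty; rewrite !inE; apply: contraLR few; rewrite negb_or -ltnNge.
  case/andP => yc ayc; have yac : y != alpha c.
    by apply: contraNneq ayc => ->; rewrite alphaK.
  have : y |: [set c; alpha c] \subset [set d | tau d == alpha d].
    apply/subsetP => u; rewrite !inE => /or3P [] /eqP ->;
    by rewrite ?ty ?tau_alpha ?tc.
  move/subset_leq_card; apply: leq_trans.
  by rewrite cardsU1 cards2 !inE negb_or yc yac eq_sym alpha_neq.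
- move=> x o _; have [xc|xNc] := boolP (on_cell o x c); last first.
    rewrite unmarked_cell_far ?orbT // => y xy.
    by rewrite inE; apply: contraNneq xNc => <-.
  have [p [q [xp xq cp cq /andP [pc qc]]]] := cell_neighbours xc.
  have [pq|pNq] := eqVneq p q; last first.
    by apply/orP; right; apply/card_gt1P; exists p, q; rewrite !inE xp xq pc qc pNq.
  have cap : c = alpha p by apply: no_multi_edge; rewrite // alphaK pq.
  by apply/orP; left; apply/existsP; exists q; rewrite xq -pq -cap set11.
Qed.

Lemma no_crossing_player2_wins :
  (forall d, tau d != alpha d) -> player2_wins alpha rho outer.
Proof. by move=> no_cross; apply/mirror_position_losing/mirror_position_set0. Qed.

Lemma crossing_player1_wins c : #|[set d | tau d == alpha d]| <= 2 ->
  tau c = alpha c -> 2 < #|D| -> player1_wins alpha rho outer.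
Proof.
move=> few tc D_gt2; have legal_c := crossing_legal tc (crossing_dart_moves tc D_gt2).
apply: (Winning legal_c); right; rewrite setU0.
exact/mirror_position_losing/mirror_position_crossing.
Qed.

End MirrorStrategy.

Theorem corollary5p3 (D : finType) (alpha rho tau : {perm D}) (outer : D) :
  plane_board alpha rho ->
  reflection_symmetry alpha rho outer tau ->
  (* no edge lies along the axis of symmetry *)
  (forall d, tau d != d) ->
  (* at most one edge crosses the axis (an edge crossing the axis has its two darts swapped) *)
  #|[set d | tau d == alpha d]| <= 2 ->
  ((forall d, tau d != alpha d) -> player2_wins alpha rho outer) /\
  ((exists d, tau d = alpha d) -> 2 < #|D| -> player1_wins alpha rho outer).
Proof.
move=> board sym tau_neq few; split; first exact: no_crossing_player2_wins.
by case=> c tc; apply: crossing_player1_wins tc.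
Qed.
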